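(* Let $\mathcal C$ be an operadic category. The unit $U$ of $\mathrm{Coll}_{\mathcal C}$ has a unique right $U$-module structure, and with it $U$ is the unit of $\mathrm{Coll}_{\mathcal C}^U$. For right $U$-modules (equivalently presheaves on $\mathbb C$) $X$ and $Y$, the tensor product $X\wedge Y$ is the quotient of $X*Y$ by the equivalence relation generated by $(x,\pi\varphi,y)\sim(x\pi,\varphi,y_\pi)$, where $\varphi:c\to d'$ is in $\mathcal C$, $\pi:d'\to d$ is in $\mathbb C$, $x\in X_d$, $y=(y_i)_{i\in|d|}$ with $y_i\in Y_{(\pi\varphi)^{-1}i}$, and $y_\pi$ is the $|d'|$-indexed family with $(y_\pi)_{i'}=y_{|\pi|(i')}$. Moreover, if $\sigma:c'\to c$ is in $\mathbb C$, then the $\mathbb C$-action on $X\wedge Y$ is given by $[x,\varphi,y]\sigma=[x,\varphi\sigma,y\sigma]$, where $\varphi:c\to d$, $x\in X_d$, $y=(y_i\in Y_{\varphi^{-1}i})_{i\in|d|}$, and $y\sigma$ is the $|d|$-indexed family with $(y\sigma)_i=y_i\sigma_i^\varphi$.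
   Context: Operadic categories: $\mathcal S$ is a skeleton of finite sets, with fixed equivalences $R_I:\mathcal S/I\to\mathcal S^I$ sending $f:J\to I$ to its fibres. An operadic category is a category $\mathcal C$ with a functor $|\cdot|:\mathcal C\to\mathcal S$ and functors $R_c:\mathcal C/c\to\mathcal C^{|c|}$ with $|\cdot|^{|c|}\circ R_c=R_{|c|}\circ(|\cdot|/c)$; the fibre $\psi^{-1}i$ of $\psi:c\to d$ at $i\in|d|$ is the $i$-th component of $R_d(\psi)$; for $\varphi:b\to c,\psi:c\to d$, $\varphi^\psi=R_d(\varphi:\psi\varphi\to\psi)$ with components $\varphi^\psi_j:(\psi\varphi)^{-1}j\to\psi^{-1}j$; $u$ is trivial if $|u|=1$ and $R_u=\mathrm{dom}$. Axioms: fibres of identities are trivial; double slice condition: for $\psi:c\to d$, $R_c\circ(\mathrm{dom}/\psi)=(\cong)\circ(\prod_jR_{\psi^{-1}j})\circ(R_d/\psi)$ as functors $(\mathcal C/d)/\psi\to\mathcal C^{|c|}$, via $\mathcal C^{|d|}/R_d\psi\cong\prod_j\mathcal C/\psi^{-1}j$ and $|c|\cong\sum_j|\psi|^{-1}j$. A morphism is fibrewise trivial if all its fibres are trivial; these form a wide subcategory $\mathbb C$ of $\mathcal C$. $\mathrm{Coll}_{\mathcal C}$ is the skew monoidal category with underlying category $\mathbf{Set}/C$ ($C$ = object set; objects $\partial:X\to C$, $X_c=\partial^{-1}c$), tensor $(X*Y)_c=\sum_{\varphi:c\to d}X_d\times\prod_{i\in|d|}Y_{\varphi^{-1}i}$ (elements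 $(x,\varphi,y)$), unit $U$ the set of trivial objects, maps $\alpha(x,\psi,y,\varphi,z)=(x,\psi\varphi,y,\varphi^\psi,z)$, $\lambda(u,\varphi,x)=x$, $\rho(x)=(x,1_{\partial x},(1_{\partial x}^{-1}i)_i)$. A right $U$-module is $X$ with $r:X*U\to X$ such that $r(r*1)=r(1*\lambda)\alpha$ and $r\rho=1$. An element of $(X*U)_c$ amounts to a morphism $\pi:c\to d$ in $\mathbb C$ and $x\in X_d$; thus a right $U$-module is the same as a presheaf on $\mathbb C$, writing $x\pi\in X_c$ for the action. $\mathrm{Coll}_{\mathcal C}^U$ is the category of right $U$-modules with the following skew monoidal structure: $X\wedge Y$ is the coequalizer $p:X*Y\to X\wedge Y$ of the two maps $r_X*1$ and $(1*\lambda)\circ\alpha$ from $(X*U)*Y$ to $X*Y$, with action $r:(X\wedge Y)*U\to X\wedge Y$ determined by $r\circ(p*1)=p\circ(1*r_Y)\circ\alpha$; the unit is $U$; the structure maps are induced from those of $\mathrm{Coll}_{\mathcal C}$ via the quotient maps. $[x,\varphi,y]$ denotes the class of $(x,\varphi,y)$. *)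

From Stdlib Require Import Relations.Relation_Operators.
From Stdlib Require List.
From mathcomp Require Import all_boot.

Set Implicit Arguments.
Unset Strict Implicit.
Unset Printing Implicit Defensive.

(* The skeleton S of finite sets: the object n is {0,...,n-1}; a map        *)
(* m -> n is represented by f : nat -> nat (only its values on i < m        *)
(* matter).  The fixed equivalences R_I : S/I -> S^I are the canonical      *)
(* order-preserving ones: the fibre of f : m -> n at i is the cardinal of   *)
(* f^{-1}(i), its elements being enumerated in increasing order.            *)

Definition sfibcard (f : nat -> nat) (m i : nat) : nat :=
  count (fun k => f k == i) (iota 0 m).
Definition sfibelt (f : nat -> nat) (m i l : nat) : nat :=
  nth 0 [seq k <- iota 0 m | f k == i] l.
Definition sfibidx (f : nat -> nat) (m k : nat) : nat :=
  index k [seq k' <- iota 0 m | f k' == f k].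

(* Data of an operadic category, presented essentially-algebraically:       *)
(* a type of objects, a type of morphisms with odom/ocod, identities and      *)
(* composition (ocomp g f = g o f), the cardinality functor |.| (ocard on     *)
(* objects, ocardm on morphisms), and the fibre functors R_c:                *)
(*   ofib psi i      = psi^{-1} i          (i < |ocod psi|)                  *)
(*   ofibm phi psi j = phi^psi_j : (psi phi)^{-1} j -> psi^{-1} j            *)
(*                    i.e. the j-th component of R_d(phi : psi phi -> psi). *)
Record OpCatData := OpCatD {
  Ob : Type;
  Mor : Type;
  odom : Mor -> Ob;
  ocod : Mor -> Ob;
  oid : Ob -> Mor;
  ocomp : Mor -> Mor -> Mor;
  ocard : Ob -> nat;
  ocardm : Mor -> nat -> nat;
  ofib : Mor -> nat -> Ob;
  ofibm : Mor -> Mor -> nat -> Mor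
}.

Section OpCat.
Variable C : OpCatData.
Local Notation Ob := (Ob C).
Local Notation Mor := (Mor C).
Local Notation odom := (@odom C).
Local Notation ocod := (@ocod C).
Local Notation oid := (@oid C).
Local Notation ocomp := (@ocomp C).
Local Notation ocard := (@ocard C).
Local Notation ocardm := (@ocardm C).
Local Notation ofib := (@ofib C).
Local Notation ofibm := (@ofibm C).

Definition trivial (u : Ob) : Prop :=
  [/\ ocard u = 1,
      (forall psi, ocod psi = u -> ofib psi 0 = odom psi) &
      (forall phi psi, ocod psi = u -> ocod phi = odom psi -> ofibm phi psi 0 = phi)].

(* fibrewise trivial morphisms: the morphisms of the wide subcategory \mathbb C *)
Definition inC (pi : Mor) : Prop :=
  forall i, i < ocard (ocod pi) -> trivial (ofib pi i).

Definition is_opcat : Prop :=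
  (forall c, odom (oid c) = c /\ ocod (oid c) = c) /\
  (forall f g, ocod f = odom g -> odom (ocomp g f) = odom f /\ ocod (ocomp g f) = ocod g) /\
  (forall f, ocomp f (oid (odom f)) = f /\ ocomp (oid (ocod f)) f = f) /\
  (forall f g h, ocod f = odom g -> ocod g = odom h ->
     ocomp h (ocomp g f) = ocomp (ocomp h g) f) /\
  (forall f i, i < ocard (odom f) -> ocardm f i < ocard (ocod f)) /\
  (forall c i, i < ocard c -> ocardm (oid c) i = i) /\
  (forall f g i, ocod f = odom g -> i < ocard (odom f) ->
     ocardm (ocomp g f) i = ocardm g (ocardm f i)) /\
  (forall phi psi j, ocod phi = odom psi -> j < ocard (ocod psi) ->
     odom (ofibm phi psi j) = ofib (ocomp psi phi) j /\ ocod (ofibm phi psi j) = ofib psi j) /\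
  (forall psi j, j < ocard (ocod psi) -> ofibm (oid (odom psi)) psi j = oid (ofib psi j)) /\
  (forall phi' phi psi j, ocod phi' = odom phi -> ocod phi = odom psi ->
     j < ocard (ocod psi) ->
     ofibm (ocomp phi phi') psi j = ocomp (ofibm phi psi j) (ofibm phi' (ocomp psi phi) j)) /\
  (* |.|^{|c|} o R_c = R_{|c|} o (|.|/c) *)
  (forall psi j, j < ocard (ocod psi) ->
     ocard (ofib psi j) = sfibcard (ocardm psi) (ocard (odom psi)) j) /\
  (forall phi psi j k, ocod phi = odom psi -> j < ocard (ocod psi) ->
     k < ocard (ofib (ocomp psi phi) j) ->
     ocardm (ofibm phi psi j) k =
     sfibidx (ocardm psi) (ocard (odom psi))
       (ocardm phi (sfibelt (ocardm (ocomp psi phi)) (ocard (odom phi)) j k))) /\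
  (forall c i, i < ocard c -> trivial (ofib (oid c) i)) /\
  (* double slice condition, on objects and on morphisms of (C/d)/psi, with
     the identification |c| = sum_j |psi|^{-1} j, k |-> (|psi| k, sfibidx k) *)
  (forall phi psi k, ocod phi = odom psi -> k < ocard (odom psi) ->
     ofib phi k =
     ofib (ofibm phi psi (ocardm psi k)) (sfibidx (ocardm psi) (ocard (odom psi)) k)) /\
  (forall chi phi psi k, ocod chi = odom phi -> ocod phi = odom psi ->
     k < ocard (odom psi) ->
     ofibm chi phi k =
     ofibm (ofibm chi (ocomp psi phi) (ocardm psi k)) (ofibm phi psi (ocardm psi k))
          (sfibidx (ocardm psi) (ocard (odom psi)) k)).

(* Collections: objects of Set/C.  A collection is a carrier type with a    *)
(* map bd (= \partial) to objects, restricted to the elements satisfying    *)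
(* okc; X_c = { x | okc x /\ bd x = c }.                                    *)
Record coll := Coll { car : Type; bd : car -> Ob; okc : car -> Prop }.

Definition is_map (X Y : coll) (f : car X -> car Y) : Prop :=
  forall t, okc t -> okc (f t) /\ bd (f t) = bd t.

(* X * Y : elements (x, phi, y) with phi : c -> d, x in X_d,
   y = (y_i)_{i < |d|}, y_i in Y_{phi^{-1} i} *)
Definition tens (X Y : coll) : coll :=
  @Coll (car X * Mor * seq (car Y))%type
    (fun t => odom t.1.2)
    (fun t => let: (x, phi, ys) := t in
       [/\ okc x, bd x = ocod phi,
           map (@bd Y) ys = mkseq (ofib phi) (ocard (ocod phi)) &
           List.Forall (@okc Y) ys]).

Definition Ucoll : coll := @Coll Ob id trivial.

Definition tmap (X X' Y Y' : coll) (f : car X -> car X') (g : car Y -> car Y')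
  (t : car (tens X Y)) : car (tens X' Y') :=
  let: (x, phi, ys) := t in (f x, phi, map g ys).

(* alpha (x, psi, y, phi, z) = (x, psi phi, y, phi^psi, z);
   the z-family is split along |d| = sum_j |psi|^{-1} j *)
Definition alpha (X Y Z : coll) (t : car (tens (tens X Y) Z)) :
  car (tens X (tens Y Z)) :=
  let: ((x, psi, ys), phi, zs) := t in
  (x, ocomp psi phi,
   [seq (p.2, ofibm phi psi p.1,
         mask [seq ocardm psi k == p.1 | k <- iota 0 (size zs)] zs)
   | p <- zip (iota 0 (size ys)) ys]).

(* lambda_U : U * U -> U,  lambda(u, phi, x) = x *)
Definition lamU (t : car (tens Ucoll Ucoll)) : car Ucoll :=
  let: (u, phi, us) := t in head (odom phi) us.

(* 1 * lambda : X * (U * Y) -> X * Y  (on valid elements each inner family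
   has exactly one member, lambda(u,phi,(y)) = y) *)
Definition one_lam (X Y : coll) (t : car (tens X (tens Ucoll Y))) :
  car (tens X Y) :=
  let: (x, phi, ts) := t in (x, phi, flatten [seq s.2 | s <- ts]).

Definition rho (X : coll) (x : car X) : car (tens X Ucoll) :=
  (x, oid (bd x), mkseq (ofib (oid (bd x))) (ocard (bd x))).

Definition is_module (X : coll) (r : car (tens X Ucoll) -> car X) : Prop :=
  [/\ is_map r,
      (forall w, @okc (tens (tens X Ucoll) Ucoll) w ->
         r (tmap r id w) = r (@one_lam X Ucoll (alpha w))) &
      (forall x, okc x -> r (rho x) = x)].

(* the pairs identified by the coequalizer of r_X * 1 and (1 * lambda) o alpha *)
Definition Rco (X Y : coll) (rX : car (tens X Ucoll) -> car X)
  (a b : car (tens X Y)) : Prop :=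
  exists w, @okc (tens (tens X Ucoll) Y) w /\
    a = tmap rX id w /\ b = one_lam (alpha w).

Definition Rsim (X Y : coll) (rX : car (tens X Ucoll) -> car X)
  (a b : car (tens X Y)) : Prop :=
  exists x phi pi (ys : seq (car Y)),
    [/\ @okc (tens X Y) a, a = (x, ocomp pi phi, ys),
        ocod phi = odom pi, inC pi &
        b = (rX (x, pi, mkseq (ofib pi) (ocard (ocod pi))), phi,
             pmap (fun i => onth ys (ocardm pi i)) (iota 0 (ocard (ocod phi))))].

Definition ysigma (Y : coll) (rY : car (tens Y Ucoll) -> car Y)
  (phi sigma : Mor) (ys : seq (car Y)) : seq (car Y) :=
  [seq rY (p.2, ofibm sigma phi p.1,
           mkseq (ofib (ofibm sigma phi p.1)) (ocard (ofib phi p.1)))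
  | p <- zip (iota 0 (size ys)) ys].

End OpCat.

Arguments Coll {C}.

(* An element of X * U over c is the same as an element x of X and a fibrewise
   trivial pi : c -> d, its U-family being forced to be the family of fibres of
   pi; since U has exactly one element over each trivial object, the only map
   U * U -> U over the objects is lambda_U.  For pi fibrewise trivial, |pi| is a
   bijection and, by the double slice condition, the fibres of phi are those of
   pi phi reindexed along |pi|.  So the regrouping performed by alpha and the
   reindexing y |-> y_pi are mutually inverse, which makes the generating pairs of
   the coequalizer exactly the pairs (x pi, phi, y_pi) ~ (x, pi phi, y) read
   backwards.  Likewise the double slice condition identifies the blocks into
   which alpha cuts the fibre family of sigma with the fibre families of the
   sigma^phi_j, which gives the formula for the action. *)

From Stdlib Require Import Relations.Relation_Operators.
From Stdlib Require List.
From mathcomp Require Import all_boot.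

Set Implicit Arguments.
Unset Strict Implicit.
Unset Printing Implicit Defensive.

Lemma Forall_nthP (T : Type) (P : T -> Prop) (s : seq T) :
  List.Forall P s <-> forall x0 i, i < size s -> P (nth x0 s i).
Proof.
split.
  by elim=> // x s' Px _ IH x0 [|i] //= /IH.
elim: s => [|x s IH] H; constructor; first exact: (H x 0).
by apply: IH => x0 i; apply: (H x0 i.+1).
Qed.

Lemma Forall_mkseq (T : Type) (P : T -> Prop) (g : nat -> T) n :
  List.Forall P (mkseq g n) <-> forall i, i < n -> P (g i).
Proof.
rewrite Forall_nthP size_mkseq; split=> [H i lt_in | H x0 i lt_in].
  by have := H (g i) i lt_in; rewrite nth_mkseq.
by rewrite nth_mkseq //; apply: H.
Qed.

Lemma Forall_zip_iota (T : Type) (P : nat * T -> Prop) (ys : seq T) :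
  (forall y0 j, j < size ys -> P (j, nth y0 ys j)) ->
  List.Forall P (zip (iota 0 (size ys)) ys).
Proof.
move=> H; apply/Forall_nthP => -[j0 y0] i.
rewrite size_zip size_iota minnn => lt_i.
by rewrite nth_zip ?size_iota // nth_iota // add0n; apply: H.
Qed.

Lemma Forall_cat (T : Type) (P : T -> Prop) (s1 s2 : seq T) :
  List.Forall P s1 -> List.Forall P s2 -> List.Forall P (s1 ++ s2).
Proof. by elim=> //= x s Px _ IH /IH; constructor. Qed.

Lemma Forall_mask (T : Type) (P : T -> Prop) (m : bitseq) (s : seq T) :
  List.Forall P s -> List.Forall P (mask m s).
Proof.
elim: s m => [|x s IH] [|[] m] //= /List.Forall_cons_iff [Px Ps]; last exact: IH.
by constructor; last exact: IH.
Qed.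

Lemma Forall_pmap (A T : Type) (P : T -> Prop) (h : A -> option T) (l : seq A) :
  (forall a y, h a = Some y -> P y) -> List.Forall P (pmap h l).
Proof.
move=> H; elim: l => [|a l IH] /=; first constructor.
by case E: (h a) => [y|] //=; constructor; first exact: H E.
Qed.

Lemma Forall_onth (T : Type) (P : T -> Prop) (s : seq T) n y :
  List.Forall P s -> onth s n = Some y -> P y.
Proof.
move=> /Forall_nthP Ps E; rewrite -(onth_nth y _ _ _ E); apply: Ps.
by rewrite -onthTE E.
Qed.

Lemma size_map_mkseq (T U : Type) (h : T -> U) (s : seq T) (g : nat -> U) n :
  map h s = mkseq g n -> size s = n.
Proof. by move/(congr1 size); rewrite size_map size_mkseq. Qed.

Lemma clos_rst_converse (A : Type) (R S : A -> A -> Prop) :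
  (forall a b, R a b -> S b a) ->
  forall a b, clos_refl_sym_trans A R a b -> clos_refl_sym_trans A S a b.
Proof.
move=> RS a b; elim=> [u v /RS Svu|u|u v _|u v w _ IHuv _ IHvw].
- exact/rst_sym/rst_step.
- exact: rst_refl.
- exact: rst_sym.
- exact: rst_trans IHuv IHvw.
Qed.

(* [reindex |pi|] is y |-> y_pi; [regroup |psi|] is the splitting of the z-family
   performed by [alpha], flattened. *)
Definition reindex (T : Type) (f : nat -> nat) (m : nat) (ys : seq T) : seq T :=
  pmap (fun i => onth ys (f i)) (iota 0 m).

Definition regroup (T : Type) (f : nat -> nat) (n : nat) (zs : seq T) : seq T :=
  flatten [seq mask [seq f k == j | k <- iota 0 (size zs)] zs | j <- iota 0 n].

Section Reindexing.
Variables (f : nat -> nat) (m n : nat).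

Lemma map_reindex (T U : Type) (g : T -> U) (ys : seq T) :
  map g (reindex f m ys) = reindex f m (map g ys).
Proof.
rewrite /reindex; elim: (iota 0 m) => //= i s IH.
by rewrite onth_map; case: onth => //= y; rewrite IH.
Qed.

Lemma map_regroup (T U : Type) (g : T -> U) (zs : seq T) :
  map g (regroup f n zs) = regroup f n (map g zs).
Proof.
rewrite /regroup map_flatten -map_comp size_map.
by congr flatten; apply: eq_map => j /=; rewrite map_mask.
Qed.

Lemma Forall_reindex (T : Type) (P : T -> Prop) (ys : seq T) :
  List.Forall P ys -> List.Forall P (reindex f m ys).
Proof. by move=> Pys; apply: Forall_pmap => i y; apply: Forall_onth. Qed.

Lemma Forall_regroup (T : Type) (P : T -> Prop) (zs : seq T) :
  List.Forall P zs -> List.Forall P (regroup f n zs).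
Proof.
move=> Pzs; rewrite /regroup; elim: (iota 0 n) => [|j s IH] /=; first constructor.
by apply: Forall_cat => //; apply: Forall_mask.
Qed.

Hypothesis f_lt : forall k, k < m -> f k < n.

Lemma reindex_nth (T : Type) (y0 : T) (ys : seq T) : size ys = n ->
  reindex f m ys = [seq nth y0 ys (f k) | k <- iota 0 m].
Proof.
move=> size_ys; rewrite /reindex.
have : all (fun k => k < m) (iota 0 m) by apply/allP => k; rewrite mem_iota.
elim: (iota 0 m) => //= k s IH /andP [lt_km /IH ->].
by rewrite onthE (nth_map y0) // size_ys f_lt.
Qed.

Lemma reindex_mkseq (T : Type) (g : nat -> T) :
  reindex f m (mkseq g n) = mkseq (g \o f) m.
Proof.
rewrite (reindex_nth (g 0)) ?size_mkseq //.
by apply/eq_in_map => k; rewrite mem_iota /= => lt_km; rewrite nth_mkseq ?f_lt.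
Qed.

Hypothesis fibre_f1 : forall j, j < n -> count (fun k => f k == j) (iota 0 m) = 1.

Definition finv (j : nat) : nat := nth 0 [seq k <- iota 0 m | f k == j] 0.

Lemma filter_fibre j : j < n -> [seq k <- iota 0 m | f k == j] = [:: finv j].
Proof.
move=> lt_jn; rewrite /finv; have := fibre_f1 lt_jn; rewrite -size_filter.
by case: [seq k <- iota 0 m | f k == j] => [|a [|b t]].
Qed.

Lemma finv_lt j : j < n -> finv j < m.
Proof.
move=> lt_jn; have : finv j \in [seq k <- iota 0 m | f k == j].
  by rewrite filter_fibre // mem_seq1.
by rewrite mem_filter mem_iota => /and3P [].
Qed.

Lemma f_finv j : j < n -> f (finv j) = j.
Proof.
move=> lt_jn; have : finv j \in [seq k <- iota 0 m | f k == j].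
  by rewrite filter_fibre // mem_seq1.
by rewrite mem_filter => /andP [/eqP].
Qed.

Lemma filter_fibre_f k : k < m -> [seq k' <- iota 0 m | f k' == f k] = [:: k].
Proof.
move=> lt_km; rewrite filter_fibre ?f_lt //; congr [:: _].
have : k \in [seq k' <- iota 0 m | f k' == f k] by rewrite mem_filter eqxx mem_iota.
by rewrite filter_fibre ?f_lt // mem_seq1 => /eqP.
Qed.

Lemma finv_f k : k < m -> finv (f k) = k.
Proof. by move=> lt_km; rewrite /finv filter_fibre_f. Qed.

Lemma sfibidx_bij k : k < m -> sfibidx f m k = 0.
Proof. by move=> lt_km; rewrite /sfibidx filter_fibre_f //= eqxx. Qed.

Lemma regroup_nth (T : Type) (y0 : T) (zs : seq T) : size zs = m ->
  regroup f n zs = [seq nth y0 zs (finv j) | j <- iota 0 n].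
Proof.
move=> size_zs; rewrite /regroup size_zs -[RHS]flatten_seq1 -map_comp.
congr flatten; apply/eq_in_map => j; rewrite mem_iota /= => lt_jn.
rewrite -[X in mask _ X](mkseq_nth y0 zs) /mkseq size_zs.
by rewrite -map_mask -filter_mask filter_fibre.
Qed.

Lemma reindexK (T : Type) (ys : seq T) : size ys = n ->
  regroup f n (reindex f m ys) = ys.
Proof.
case: ys => [<- //|y0 ys'] size_ys; move: (y0 :: ys') size_ys => ys size_ys.
have size_r : size (reindex f m ys) = m by rewrite (reindex_nth y0) // size_map size_iota.
rewrite (regroup_nth y0 size_r) -[RHS](mkseq_nth y0) size_ys.
apply/eq_in_map => j; rewrite mem_iota /= => lt_jn.
by rewrite (reindex_nth y0) // (nth_map 0) ?nth_iota ?size_iota ?finv_lt ?f_finv.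
Qed.

Lemma regroupK (T : Type) (zs : seq T) : size zs = m ->
  reindex f m (regroup f n zs) = zs.
Proof.
case: zs => [<- //|z0 zs'] size_zs; move: (z0 :: zs') size_zs => zs size_zs.
have size_r : size (regroup f n zs) = n by rewrite (regroup_nth z0) // size_map size_iota.
rewrite (reindex_nth z0 size_r) -[RHS](mkseq_nth z0) size_zs.
apply/eq_in_map => k; rewrite mem_iota /= => lt_km.
by rewrite (regroup_nth z0) // (nth_map 0) ?nth_iota ?size_iota ?f_lt ?finv_f.
Qed.
End Reindexing.

Section OperadicCategory.
Variable C : OpCatData.
Hypothesis HC : is_opcat C.

Local Notation fibres f := (mkseq (@ofib C f) (ocard (ocod f))).

Lemma odom_oid (c : Ob C) : odom (oid c) = c.
Proof. by case: HC => H _; case: (H c). Qed.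

Lemma ocod_oid (c : Ob C) : ocod (oid c) = c.
Proof. by case: HC => H _; case: (H c). Qed.

Lemma ocod_ocomp (f g : Mor C) : ocod f = odom g -> ocod (ocomp g f) = ocod g.
Proof. by case: HC => _ [H _] /H []. Qed.

Lemma ocardm_lt (f : Mor C) i : i < ocard (odom f) -> ocardm f i < ocard (ocod f).
Proof. by case: HC => _ [_ [_ [_ [H _]]]]; apply: H. Qed.

Lemma odom_ofibm (phi psi : Mor C) j : ocod phi = odom psi -> j < ocard (ocod psi) ->
  odom (ofibm phi psi j) = ofib (ocomp psi phi) j.
Proof. by case: HC => _ [_ [_ [_ [_ [_ [_ [H _]]]]]]] /H H' /H' []. Qed.

Lemma ocod_ofibm (phi psi : Mor C) j : ocod phi = odom psi -> j < ocard (ocod psi) ->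
  ocod (ofibm phi psi j) = ofib psi j.
Proof. by case: HC => _ [_ [_ [_ [_ [_ [_ [H _]]]]]]] /H H' /H' []. Qed.

Lemma ocard_ofib (psi : Mor C) j : j < ocard (ocod psi) ->
  ocard (ofib psi j) = sfibcard (ocardm psi) (ocard (odom psi)) j.
Proof. by case: HC => _ [_ [_ [_ [_ [_ [_ [_ [_ [_ [H _]]]]]]]]]]; apply: H. Qed.

Lemma ofib_double_slice (phi psi : Mor C) k :
  ocod phi = odom psi -> k < ocard (odom psi) ->
  ofib phi k =
  ofib (ofibm phi psi (ocardm psi k)) (sfibidx (ocardm psi) (ocard (odom psi)) k).
Proof.
by case: HC => _ [_ [_ [_ [_ [_ [_ [_ [_ [_ [_ [_ [_ [H _]]]]]]]]]]]]]; apply: H.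
Qed.

Lemma inC_fibres (pi : Mor C) : inC pi <-> List.Forall (@trivial C) (fibres pi).
Proof. by rewrite Forall_mkseq. Qed.

Lemma fibres_trivial_cod (phi : Mor C) :
  @trivial C (ocod phi) -> fibres phi = [:: odom phi].
Proof. by case=> card1 fib0 _; rewrite card1 /mkseq /= fib0. Qed.

Lemma okc_tens_unitP (X : coll C) x (pi : Mor C) us :
  @okc C (tens X (Ucoll C)) (x, pi, us) <->
  [/\ okc x, bd x = ocod pi, us = fibres pi & inC pi].
Proof.
rewrite /= map_id.
by split=> [[? ? -> /inC_fibres ?] | [? ? -> /(inC_fibres pi) ?]].
Qed.

Lemma one_lam_alpha (X Y : coll C) x (pi : Mor C) us phi zs :
  @one_lam C X Y (@alpha C X (Ucoll C) Y ((x, pi, us), phi, zs)) =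
  (x, ocomp pi phi, regroup (ocardm pi) (size us) zs).
Proof.
rewrite /= -map_comp; congr (_, _, flatten _).
rewrite -[in RHS](unzip1_zip (s := iota 0 (size us)) (t := us)) ?size_iota //.
by rewrite -map_comp.
Qed.

Lemma lamU_module : is_module (@lamU C).
Proof.
split.
- move=> [[u phi] us] /okc_tens_unitP [Tu /= Eu -> inC_phi].
  have := (inC_fibres phi).1 inC_phi.
  by rewrite fibres_trivial_cod -?Eu //= => /List.Forall_cons_iff [].
- move=> [[[[u psi] us] phi] vs].
  move=> /okc_tens_unitP [/okc_tens_unitP [Tu Eu -> inC_psi] /= Epsi -> _].
  have := (inC_fibres psi).1 inC_psi.
  rewrite fibres_trivial_cod -?Eu // => /List.Forall_cons_iff [T_dom_psi _].
  have psi0 : ocardm psi 0 = 0.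
    have card_cod : ocard (ocod psi) = 1 by rewrite -Eu; case: Tu.
    apply/eqP; rewrite -leqn0 -ltnS -card_cod ocardm_lt //.
    by case: T_dom_psi => ->.
  rewrite Epsi in T_dom_psi.
  by rewrite fibres_trivial_cod //= psi0.
- move=> x Tx /=; have := @fibres_trivial_cod (oid x).
  by rewrite ocod_oid odom_oid => /(_ Tx) ->.
Qed.

Lemma lamU_unique (r : car (tens (Ucoll C) (Ucoll C)) -> car (Ucoll C)) :
  is_module r -> forall t, okc t -> r t = lamU t.
Proof.
move=> [r_map _ _] [[u phi] us] ok_t; have [_ /= ->] := r_map _ ok_t.
by move: ok_t => /okc_tens_unitP [Tu /= Eu ->]; rewrite fibres_trivial_cod -?Eu.
Qed.

Lemma inC_fibre1 (pi : Mor C) : inC pi -> forall j, j < ocard (ocod pi) ->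
  count (fun k => ocardm pi k == j) (iota 0 (ocard (odom pi))) = 1.
Proof.
move=> inC_pi j lt_j; rewrite -[count _ _]/(sfibcard _ _ _) -ocard_ofib //.
by case: (inC_pi j lt_j).
Qed.

Lemma ofib_inC_comp (pi phi : Mor C) k : inC pi -> ocod phi = odom pi ->
  k < ocard (odom pi) -> ofib phi k = ofib (ocomp pi phi) (ocardm pi k).
Proof.
move=> inC_pi phi_pi lt_k; have lt_pik := ocardm_lt lt_k.
rewrite (ofib_double_slice phi_pi lt_k).
rewrite (sfibidx_bij (@ocardm_lt pi) (inC_fibre1 inC_pi)) //.
have [_ fib0 _] := inC_pi _ lt_pik.
by rewrite fib0 ?ocod_ofibm ?odom_ofibm.
Qed.

Lemma reindexK_inC (pi : Mor C) (T : Type) (ys : seq T) :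
  inC pi -> size ys = ocard (ocod pi) ->
  regroup (ocardm pi) (ocard (ocod pi)) (reindex (ocardm pi) (ocard (odom pi)) ys) = ys.
Proof. by move=> inC_pi; apply: reindexK; [exact: ocardm_lt | exact: inC_fibre1]. Qed.

Lemma regroupK_inC (pi : Mor C) (T : Type) (zs : seq T) :
  inC pi -> size zs = ocard (odom pi) ->
  reindex (ocardm pi) (ocard (odom pi)) (regroup (ocardm pi) (ocard (ocod pi)) zs) = zs.
Proof. by move=> inC_pi; apply: regroupK; [exact: ocardm_lt | exact: inC_fibre1]. Qed.

Lemma fibres_inC_comp (pi phi : Mor C) : inC pi -> ocod phi = odom pi ->
  fibres phi = reindex (ocardm pi) (ocard (odom pi)) (fibres (ocomp pi phi)).
Proof.
move=> inC_pi phi_pi; rewrite ocod_ocomp // reindex_mkseq; last exact: ocardm_lt.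
rewrite phi_pi; apply/eq_in_map => k; rewrite mem_iota => lt_k.
exact: ofib_inC_comp.
Qed.

Lemma mask_fibres_ofibm (sigma phi : Mor C) j :
  ocod sigma = odom phi -> j < ocard (ocod phi) ->
  mask [seq ocardm phi k == j | k <- iota 0 (ocard (ocod sigma))] (fibres sigma) =
  mkseq (ofib (ofibm sigma phi j)) (ocard (ofib phi j)).
Proof.
move=> sigma_phi lt_j; rewrite sigma_phi /mkseq -map_mask -filter_mask.
set s := [seq k <- iota 0 _ | _].
have size_s : size s = ocard (ofib phi j) by rewrite size_filter ocard_ofib.
rewrite -[X in map _ X](mkseq_nth 0 s) /mkseq -map_comp size_s.
apply/eq_in_map => l; rewrite mem_iota /= => lt_l.
have : nth 0 s l \in s by rewrite mem_nth ?size_s.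
rewrite {2}/s mem_filter mem_iota => /andP [/eqP phi_k /= lt_k].
rewrite (ofib_double_slice sigma_phi lt_k) /sfibidx phi_k -/s.
by rewrite index_uniq ?size_s // filter_uniq // iota_uniq.
Qed.

Lemma inC_ofibm (sigma phi : Mor C) j : inC sigma ->
  ocod sigma = odom phi -> j < ocard (ocod phi) -> inC (ofibm sigma phi j).
Proof.
move=> inC_sigma sigma_phi lt_j; apply/inC_fibres.
rewrite ocod_ofibm // -mask_fibres_ofibm //.
exact/Forall_mask/inC_fibres.
Qed.

Lemma Rco_Rsim (X Y : coll C) (rX : car (tens X (Ucoll C)) -> car X)
  (a b : car (tens X Y)) :
  Rco rX a b -> Rsim rX b a.
Proof.
move=> [[[[[x pi] us] phi] ys] [[ok_xpi pi_phi bd_ys ok_ys] [-> ->]]].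
move: ok_xpi => /okc_tens_unitP [ok_x bd_x -> inC_pi].
have phi_pi : ocod phi = odom pi := esym pi_phi.
have size_ys := size_map_mkseq bd_ys; rewrite phi_pi in size_ys.
rewrite one_lam_alpha size_mkseq.
exists x, phi, pi, (regroup (ocardm pi) (ocard (ocod pi)) ys); split=> //.
- split=> //; first by rewrite ocod_ocomp.
    rewrite map_regroup bd_ys (fibres_inC_comp inC_pi phi_pi) reindexK_inC //.
    by rewrite size_mkseq ocod_ocomp.
  exact: Forall_regroup.
- by rewrite /= map_id -/(reindex (ocardm pi) _ _) phi_pi regroupK_inC.
Qed.

Lemma Rsim_Rco (X Y : coll C) (rX : car (tens X (Ucoll C)) -> car X)
  (a b : car (tens X Y)) :
  Rsim rX a b -> Rco rX b a.
Proof.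
move=> [x [phi [pi [ys [ok_a Ea phi_pi inC_pi ->]]]]].
move: ok_a; rewrite Ea => -[ok_x bd_x bd_ys ok_ys].
have size_ys := size_map_mkseq bd_ys; rewrite ocod_ocomp // in size_ys.
exists ((x, pi, fibres pi), phi, reindex (ocardm pi) (ocard (ocod phi)) ys).
split; [split | split].
- by apply/okc_tens_unitP; split=> //; rewrite bd_x ocod_ocomp.
- by rewrite phi_pi.
- by rewrite map_reindex bd_ys (fibres_inC_comp inC_pi phi_pi) phi_pi.
- exact: Forall_reindex.
- by rewrite /= map_id.
- by rewrite one_lam_alpha size_mkseq phi_pi reindexK_inC.
Qed.

Lemma okc_act_ofibm (Y : coll C) y (sigma phi : Mor C) j :
  inC sigma -> ocod sigma = odom phi -> j < ocard (ocod phi) ->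
  okc y -> bd y = ofib phi j ->
  @okc C (tens Y (Ucoll C))
    (y, ofibm sigma phi j, mkseq (ofib (ofibm sigma phi j)) (ocard (ofib phi j))).
Proof.
move=> inC_sigma sigma_phi lt_j ok_y bd_y; apply/okc_tens_unitP.
by rewrite ocod_ofibm //; split=> //; apply: inC_ofibm.
Qed.

Lemma tmap_alpha_fibres (X Y : coll C) (rY : car (tens Y (Ucoll C)) -> car Y)
  x phi ys sigma :
  @okc C (tens X Y) (x, phi, ys) -> ocod sigma = odom phi ->
  tmap id rY (@alpha C X Y (Ucoll C) ((x, phi, ys), sigma, fibres sigma)) =
  (x, ocomp phi sigma, ysigma rY phi sigma ys).
Proof.
move=> [_ _ /size_map_mkseq size_ys _] sigma_phi.
rewrite /= -map_comp; congr (_, _, _).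
apply: List.map_ext_Forall; apply: Forall_zip_iota => y0 j lt_j /=.
by rewrite size_mkseq mask_fibres_ofibm // -size_ys.
Qed.

Lemma okc_ysigma (X Y : coll C) (rY : car (tens Y (Ucoll C)) -> car Y)
  x phi ys sigma :
  is_map rY -> @okc C (tens X Y) (x, phi, ys) -> ocod sigma = odom phi -> inC sigma ->
  @okc C (tens X Y) (x, ocomp phi sigma, ysigma rY phi sigma ys).
Proof.
move=> rY_map [ok_x bd_x bd_ys ok_ys] sigma_phi inC_sigma.
have size_ys := size_map_mkseq bd_ys.
pose act (p : nat * car Y) : car (tens Y (Ucoll C)) :=
  (p.2, ofibm sigma phi p.1, mkseq (ofib (ofibm sigma phi p.1)) (ocard (ofib phi p.1))).
have ok_act : List.Forall (fun p => p.1 < ocard (ocod phi) /\ okc (act p))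
                (zip (iota 0 (size ys)) ys).
  apply: Forall_zip_iota => y0 j; rewrite size_ys => lt_j; split=> //.
  apply: okc_act_ofibm => //; first by apply: (Forall_nthP _ _).1; rewrite ?size_ys.
  by rewrite -(nth_map y0 (bd y0)) ?size_ys // bd_ys nth_mkseq.
split=> //; first by rewrite ocod_ocomp.
- rewrite /ysigma -map_comp.
  transitivity [seq ofib (ocomp phi sigma) p.1 | p <- zip (iota 0 (size ys)) ys].
    apply: List.map_ext_Forall; apply: List.Forall_impl ok_act => -[j y] [lt_j].
    by move=> /rY_map [_ bd_act]; rewrite /= -odom_ofibm //; exact: bd_act.
  rewrite /mkseq ocod_ocomp // -size_ys.
  by rewrite -{2}(unzip1_zip (s := iota 0 (size ys)) (t := ys)) ?size_iota // -map_comp.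
- apply/List.Forall_map; apply: List.Forall_impl ok_act => p [_ /rY_map []] //.
Qed.
End OperadicCategory.

Theorem proposition9p2 (C : OpCatData) (HC : is_opcat C) :
  (* U has a unique right U-module structure, namely lambda_U (the one
     making U the unit of Coll^U) *)
  (is_module (@lamU C) /\
   forall r, is_module r ->
     forall t, @okc C (tens (Ucoll C) (Ucoll C)) t -> r t = lamU t) /\
  (* X /\ Y is the quotient of X * Y by the equivalence generated by ~ *)
  (forall (X Y : coll C) rX rY, is_module rX -> @is_module C Y rY ->
     forall a b, okc a -> okc b ->
       (clos_refl_sym_trans _ (@Rco C X Y rX) a b <->
        clos_refl_sym_trans _ (@Rsim C X Y rX) a b)) /\
  (* the C-action on X /\ Y: [x, phi, y] sigma = [x, phi sigma, y sigma] *)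
  (forall (X Y : coll C) rX rY, is_module rX -> @is_module C Y rY ->
     forall x phi ys sigma,
       @okc C (tens X Y) (x, phi, ys) -> ocod sigma = odom phi -> inC sigma ->
       @okc C (tens X Y) (x, ocomp phi sigma, ysigma rY phi sigma ys) /\
       clos_refl_sym_trans _ (@Rco C X Y rX)
         (tmap id rY (@alpha C X Y (Ucoll C) ((x, phi, ys), sigma,
                             mkseq (ofib sigma) (ocard (ocod sigma)))))
         (x, ocomp phi sigma, ysigma rY phi sigma ys)).
Proof.
split; first by split; [exact: lamU_module | exact: lamU_unique].
split.
  move=> X Y rX rY _ _ a b _ _.
  by split; apply: clos_rst_converse; [exact: Rco_Rsim | exact: Rsim_Rco].
move=> X Y rX rY _ [rY_map _ _] x phi ys sigma ok_xys sigma_phi inC_sigma.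
split; first exact: okc_ysigma.
by rewrite tmap_alpha_fibres //; apply: rst_refl.
Qed.
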